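(* Let $\Gamma$ be a minimal subgroup of $\mathrm{Homeo}_+(S^1)$ admitting no $\Gamma$-invariant probability measure on $S^1$, and let $\theta\in\mathrm{Homeo}_+(S^1)$ be a periodic homeomorphism commuting with every element of $\Gamma$ such that for every $x\in S^1$ every closed interval contained in $[x,\theta(x)[$ is $\Gamma$-contractible (with $[x,\theta(x)[$ meaning the whole circle if $\theta=\mathrm{id}$). Let $\kappa$ be the period of $\theta$ and let $I_0\subset S^1$ be a closed interval such that $I_0,\theta(I_0),\dots,\theta^{\kappa-1}(I_0)$ are pairwise disjoint. Then there exists $h\in\Gamma$ such that $$\emptyset\neq\mathrm{Fix}(h)\subset \bigcup_{j=0}^{\kappa-1}\mathrm{Int}(\theta^j(I_0))\quad\text{and}\quad h\Big(S^1\setminus\bigcup_{j=0}^{\kappa-1}\mathrm{Int}(\theta^j(I_0))\Big)\subset\bigcup_{j=0}^{\kappa-1}\mathrm{Int}(\theta^j(I_0)).$$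
   Context: $\Gamma$ is minimal if every orbit is dense. A closed interval $I\subset S^1$ is $\Gamma$-contractible if there is a sequence $(g_n)$ in $\Gamma$ with the length of $g_n(I)$ tending to $0$. $[x,\theta(x)[$ denotes the half-open arc from $x$ to $\theta(x)$ in the positive direction. $\mathrm{Fix}(h)$ is the fixed point set of $h$. *)

(* the circle S^1 = R/Z, handled through lifts to R. *)
From Stdlib Require Import Reals Lra ZArith.
Open Scope R_scope.

Definition ceq (x y : R) : Prop := exists k : Z, y = x + IZR k.

(* F : R -> R is a lift of an orientation-preserving homeomorphism of S^1 *)
Definition is_lift (F : R -> R) : Prop :=
  continuity F /\ (forall x y, x < y -> F x < F y) /\ (forall x, F (x + 1) = F x + 1).

Definition heq (F G : R -> R) : Prop := forall x, ceq (F x) (G x).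

(* A subgroup of Homeo_+(S^1), given as the set of all lifts of its elements. *)
Definition is_subgroup (G : (R -> R) -> Prop) : Prop :=
  (forall F, G F -> is_lift F) /\
  G (fun x => x) /\
  (forall F H, G F -> G H -> G (fun x => F (H x))) /\
  (forall F, G F -> exists H, G H /\ forall x, H (F x) = x) /\
  (forall F F', G F -> is_lift F' -> heq F F' -> G F').

Definition minimal (G : (R -> R) -> Prop) : Prop :=
  forall x y eps, 0 < eps ->
    exists F k, G F /\ Rabs (F x - (y + IZR k)) < eps.

(* subsets of S^1 = subsets of R invariant under x |-> x+1 *)
Definition periodic_set (A : R -> Prop) : Prop := forall x, A x <-> A (x + 1).

Inductive borel : (R -> Prop) -> Prop :=
| borel_open : forall U, open_set U -> periodic_set U -> borel U
| borel_compl : forall A, borel A -> borel (fun x => ~ A x)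
| borel_union : forall A : nat -> R -> Prop,
    (forall n, borel (A n)) -> borel (fun x => exists n, A n x)
| borel_ext : forall A B, (forall x, A x <-> B x) -> borel A -> borel B.

(* Borel probability measure on S^1 (values on non-Borel sets irrelevant) *)
Definition prob_measure (mu : (R -> Prop) -> R) : Prop :=
  (forall A, borel A -> 0 <= mu A) /\
  mu (fun _ => True) = 1 /\
  (forall A B, (forall x, A x <-> B x) -> mu A = mu B) /\
  (forall A : nat -> R -> Prop,
     (forall n, borel (A n)) ->
     (forall n m x, n <> m -> A n x -> A m x -> False) ->
     infinite_sum (fun n => mu (A n)) (mu (fun x => exists n, A n x))).

Definition invariant_measure (G : (R -> R) -> Prop) (mu : (R -> Prop) -> R) : Prop :=
  forall F A, G F -> borel A -> mu (fun x => A (F x)) = mu A.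

(* closed interval [a, a+l] of S^1 (0 < l < 1) is G-contractible *)
Definition contractible (G : (R -> R) -> Prop) (a l : R) : Prop :=
  exists g : nat -> R -> R, (forall n, G (g n)) /\
    Un_cv (fun n => g n (a + l) - g n a) 0.

Definition in_arc_co (x d y : R) : Prop :=
  exists k : Z, x <= y + IZR k < x + d.

(* y lies in the interior of theta^j([a, a+l]) for some j < kappa *)
Definition in_union_int (T : R -> R) (kappa : nat) (a l y : R) : Prop :=
  exists j t, (j < kappa)%nat /\ 0 < t < l /\ ceq y (Nat.iter j T (a + t)).

From Stdlib Require Import Reals ZArith.
From Stdlib Require Import Lra Lia Classical.
Open Scope R_scope.

(* Put c' = a + l/4 and
   c = a + l/2 (both interior points of I_0) and let [c, c + d[ be the arc
   from c to theta(c).  Four general facts are established first: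
   - the arcs theta^j([c, c + d[), j < kappa, cover the circle;
   - theta(c') lies strictly inside [c, c + d[, at a lift e with c < e
     (otherwise theta would send a point of I_0 onto c in I_0);
   - in a minimal group, a contractible interval can be sent by some group
     element into any prescribed small ball;
   - a continuous map with H b >= b and H e <= e has a fixed point in [b, e].
   The arc [c, e] is contractible by hypothesis, so some h in Gamma sends it
   into Int(I_0) inside [c, e]: h then has a fixed point.  Every point of
   [c, c + d[ either lies in [c, e], which h sends into Int(I_0), or lies in
   ]e, c + d[ = theta(]c', c[), which is already in the union of the
   interiors; since h commutes with theta, the cover gives the last claim,
   and it forces every fixed point of h to lie in the union. *)

(** * Arithmetic of the circle R/Z and of lifts *)

Lemma ceq_refl x : ceq x x.
Proof. exists 0%Z. simpl. ring. Qed.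

Lemma ceq_sym x y : ceq x y -> ceq y x.
Proof. intros [k Hk]. exists (- k)%Z. rewrite opp_IZR. lra. Qed.

Lemma ceq_trans x y z : ceq x y -> ceq y z -> ceq x z.
Proof. intros [k Hk] [m Hm]. exists (k + m)%Z. rewrite plus_IZR. lra. Qed.

Lemma ceq_shift x k : ceq x (x + IZR k).
Proof. exists k. reflexivity. Qed.

Lemma ceq_close x y : ceq x y -> Rabs (y - x) < 1 -> x = y.
Proof.
  intros [k Hk] Hxy. replace (y - x) with (IZR k) in Hxy by lra.
  apply Rabs_def2 in Hxy. destruct Hxy as [Hup Hlow].
  assert (Hlow' : IZR (-1) < IZR k) by (simpl; lra).
  apply lt_IZR in Hlow'. apply lt_IZR in Hup.
  assert (k = 0%Z) by lia. subst. simpl in *. lra.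
Qed.

Lemma frac_exists z : exists k : Z, 0 <= z + IZR k < 1.
Proof.
  exists (1 - up z)%Z. rewrite minus_IZR. destruct (archimed z). simpl. lra.
Qed.

Lemma lift_nat F : is_lift F -> forall n x, F (x + INR n) = F x + INR n.
Proof.
  intros [_ [_ HF]] n; induction n as [|n IH]; intro x.
  - simpl. rewrite !Rplus_0_r. reflexivity.
  - rewrite S_INR. replace (x + (INR n + 1)) with ((x + INR n) + 1) by ring.
    rewrite HF, IH. ring.
Qed.

Lemma lift_Z F : is_lift F -> forall k x, F (x + IZR k) = F x + IZR k.
Proof.
  intros HF k x. destruct (Z_le_gt_dec 0 k) as [Hk|Hk].
  - rewrite <- (Z2Nat.id k Hk), <- INR_IZR_INZ. apply lift_nat; auto.
  - replace k with (- Z.of_nat (Z.to_nat (- k)))%Z by (rewrite Z2Nat.id; lia).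
    rewrite opp_IZR, <- INR_IZR_INZ. set (n := Z.to_nat (- k)).
    pose proof (lift_nat F HF n (x + - INR n)) as E.
    replace (x + - INR n + INR n) with x in E by ring. lra.
Qed.

Lemma ceq_lift F x y : is_lift F -> ceq x y -> ceq (F x) (F y).
Proof. intros HF [k Hk]. exists k. subst. apply lift_Z; auto. Qed.

Lemma lift_le F x y : is_lift F -> x <= y -> F x <= F y.
Proof. intros [_ [M _]] [H|H]; [left; auto | subst; lra]. Qed.

Lemma lift_diff_le1 F x d : is_lift F -> 0 < d <= 1 -> 0 < F (x + d) - F x <= 1.
Proof.
  intros [_ [M P]] [Hd [Hd1|Hd1]].
  - assert (F x < F (x + d)) by (apply M; lra).
    assert (F (x + d) < F (x + 1)) by (apply M; lra). rewrite P in *. lra.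
  - subst. rewrite P. assert (F x < F (x + 1)) by (apply M; lra). lra.
Qed.

Lemma iter_lift T j : is_lift T -> is_lift (Nat.iter j T).
Proof.
  intros HT. induction j as [|j IH].
  - split; [apply derivable_continuous, derivable_id | split; auto].
  - destruct HT as [CT [MT PT]], IH as [C [M P]]. split; [|split]; simpl.
    + exact (continuity_comp (Nat.iter j T) T C CT).
    + intros x y Hxy. apply MT, M, Hxy.
    + intros x. rewrite P, PT. reflexivity.
Qed.

Lemma shift_lift F (k : Z) : is_lift F -> is_lift (fun x => F x + IZR k).
Proof.
  intros [C [M P]]. split; [|split].
  - apply continuity_plus; [exact C | apply continuity_const; intros ? ?; reflexivity].
  - intros x y H. specialize (M x y H). lra.
  - intros x. rewrite P. ring.
Qed.

Lemma continuous_attains F x1 x2 v : continuity F -> x1 <= x2 ->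
  F x1 <= v <= F x2 -> exists z, x1 <= z <= x2 /\ F z = v.
Proof.
  intros CF Hx Hv.
  destruct (IVT_cor (fun x => F x - v) x1 x2) as [z [Hz Hz']].
  - apply continuity_minus; [exact CF | apply continuity_const; intros ? ?; reflexivity].
  - exact Hx.
  - nra.
  - exists z. split; [exact Hz | lra].
Qed.

Lemma fixed_point_in_interval H b e : continuity H -> b <= e ->
  b <= H b -> H e <= e -> exists z, b <= z <= e /\ H z = z.
Proof.
  intros CH Hbe Hb He.
  destruct (continuous_attains (fun x => x - H x) b e 0) as [z [Hz Hz']].
  - apply continuity_minus; [apply derivable_continuous, derivable_id | exact CH].
  - exact Hbe.
  - lra.
  - exists z. split; [exact Hz | lra].
Qed.

(** * The fundamental arc of a periodic homeomorphism *)

Section FundamentalArc.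

Variable T : R -> R.
Hypothesis HT : is_lift T.

(* disp x is the length of the arc [x, T x[, an element of ]0, 1]. *)
Definition disp (x : R) : R := T x - x + IZR (up (x - T x)).

Lemma disp_bounds x : 0 < disp x <= 1.
Proof. unfold disp. destruct (archimed (x - T x)). lra. Qed.

Lemma disp_spec x : T x + IZR (up (x - T x)) = x + disp x.
Proof. unfold disp. ring. Qed.

(* The lifted orbit of c: consecutive points are joined by the arcs [x, T x[. *)
Fixpoint orbit_seq (c : R) (j : nat) : R :=
  match j with O => c | S j => orbit_seq c j + disp (orbit_seq c j) end.

Lemma orbit_seq_ceq c j : ceq (orbit_seq c j) (Nat.iter j T c).
Proof.
  induction j as [|j IH]; simpl.
  - apply ceq_refl.
  - rewrite <- disp_spec. eapply ceq_trans; [apply ceq_sym, ceq_shift|].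
    apply ceq_lift; auto.
Qed.

Lemma orbit_seq_gt c j : (1 <= j)%nat -> c < orbit_seq c j.
Proof.
  induction j as [|j IH]; intro Hj; [lia|]. simpl.
  pose proof (disp_bounds (orbit_seq c j)).
  destruct j as [|j]; [simpl in *; lra|].
  assert (c < orbit_seq c (S j)) by (apply IH; lia). lra.
Qed.

Lemma orbit_seq_find c y m : c <= y -> y < orbit_seq c m ->
  exists j, (j < m)%nat /\ orbit_seq c j <= y < orbit_seq c (S j).
Proof.
  induction m as [|m IH]; intros H0 H1; simpl in *; [lra|].
  destruct (Rlt_le_dec y (orbit_seq c m)) as [H|H].
  - destruct (IH H0 H) as [j [Hj Hj']]. exists j. split; [lia | auto].
  - exists m. split; [lia | lra].
Qed.

Lemma orbit_seq_arc_image c j : exists Q, is_lift Q /\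
  (forall x, ceq (Q x) (Nat.iter j T x)) /\
  Q c = orbit_seq c j /\ Q (c + disp c) = orbit_seq c (S j).
Proof.
  destruct (orbit_seq_ceq c j) as [r Hr].
  set (Q := fun x => Nat.iter j T x + IZR (- r)).
  assert (HQ : is_lift Q) by (apply shift_lift, iter_lift; auto).
  assert (HQc : Q c = orbit_seq c j) by (unfold Q; rewrite opp_IZR; lra).
  exists Q. split; [exact HQ|]. split; [|split; [exact HQc|]].
  - intro x. apply ceq_sym, ceq_shift.
  - apply ceq_close.
    + (* both ends are lifts of T^(j+1) c *)
      eapply ceq_trans; [apply ceq_sym, ceq_shift|].
      rewrite <- disp_spec.
      eapply ceq_trans; [apply ceq_lift; [apply iter_lift; auto | apply ceq_sym, ceq_shift]|].
      rewrite <- Nat.iter_succ_r. apply ceq_sym, orbit_seq_ceq.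
    + pose proof (lift_diff_le1 Q c (disp c) HQ (disp_bounds c)).
      pose proof (disp_bounds (orbit_seq c j)). simpl.
      rewrite HQc in H. apply Rabs_def1; lra.
Qed.

Lemma fundamental_arc_cover kappa c : (1 <= kappa)%nat ->
  heq (Nat.iter kappa T) (fun x => x) ->
  forall y, exists j w, (j < kappa)%nat /\ c <= w < c + disp c /\
    ceq y (Nat.iter j T w).
Proof.
  intros Hk Hper y.
  destruct (frac_exists (y - c)) as [k Hk'].
  set (y' := y + IZR k).
  assert (Hy'lt : y' < orbit_seq c kappa).
  { (* orbit_seq c kappa is a lift of c lying strictly above c, hence >= c + 1 *)
    destruct (ceq_trans _ _ _ (orbit_seq_ceq c kappa) (Hper c)) as [N HN].
    pose proof (orbit_seq_gt c kappa Hk).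
    assert (HN1 : (N <= -1)%Z).
    { assert (IZR N < IZR 0) by (simpl; lra). apply lt_IZR in H0. lia. }
    apply IZR_le in HN1. simpl in HN1. unfold y'. lra. }
  destruct (orbit_seq_find c y' kappa ltac:(unfold y'; lra) Hy'lt)
    as [j [Hj [Hs1 Hs2]]].
  destruct (orbit_seq_arc_image c j) as [Q [HQ [HQT [HQc HQe]]]].
  pose proof (disp_bounds c).
  destruct (continuous_attains Q c (c + disp c) y') as [w [Hw Hw']];
    [apply HQ | lra | lra |].
  assert (Hwe : w < c + disp c).
  { destruct Hw as [_ [Hw|Hw]]; auto. subst w. lra. }
  exists j, w. split; [exact Hj|]. split; [lra|].
  apply ceq_trans with y'; [apply ceq_shift|].
  rewrite <- Hw'. apply HQT.
Qed.

End FundamentalArc.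

(** * Groups of circle homeomorphisms *)

Lemma subgroup_shift G F (k : Z) : is_subgroup G -> G F -> G (fun x => F x + IZR k).
Proof.
  intros (Glift & _ & _ & _ & Gheq) GF.
  apply (Gheq F); [exact GF | apply shift_lift, Glift, GF | intro x; apply ceq_shift].
Qed.

(* In a minimal group, a contractible interval [b, b + m] can be sent by a
   group element into any ball of the line: contract it, then use a dense
   orbit through an accumulation point of the contracted intervals. *)
Lemma contractible_into_ball G b m q r : is_subgroup G -> minimal G ->
  contractible G b m -> 0 <= m -> 0 < r ->
  exists H, G H /\ forall x, b <= x <= b + m -> Rabs (H x - q) < r.
Proof.
  intros HG Hmin [g [Gg Hcv]] Hm Hr.
  pose proof HG as (Glift & _ & Gcomp & _ & _).
  set (u := fun n => g n b + IZR (1 - up (g n b))).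
  destruct (Bolzano_Weierstrass u (fun x => 0 <= x <= 1) (compact_P3 0 1)) as [p Hadh].
  { intros n. unfold u. rewrite minus_IZR. destruct (archimed (g n b)). simpl. lra. }
  destruct (Hmin p q (r / 2) ltac:(lra)) as [F [k [GF HFp]]].
  destruct (Glift F GF) as [CF _].
  destruct (CF p (r / 2) ltac:(lra)) as [del [Hdel Hd]].
  destruct (Hcv (del / 2) ltac:(lra)) as [N HN].
  destruct (Hadh (disc p (mkposreal (del / 2) ltac:(lra))) N) as [n [Hn Hun]].
  { exists (mkposreal (del / 2) ltac:(lra)). intros ? ?; auto. }
  unfold disc in Hun. simpl in Hun.
  specialize (HN n Hn). unfold R_dist in HN. rewrite Rminus_0_r in HN.
  set (j := (1 - up (g n b))%Z).
  exists (fun x => F (g n x) + IZR (j - k)). split.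
  { apply subgroup_shift; [exact HG | apply Gcomp; auto]. }
  intros x Hx.
  assert (Hg := Glift _ (Gg n)).
  assert (g n b <= g n x) by (apply lift_le; auto; lra).
  assert (g n x <= g n (b + m)) by (apply lift_le; auto; lra).
  rewrite Rabs_right in HN by lra.
  (* g n x, moved by j turns, is within del of the accumulation point p *)
  assert (Hz : Rabs (g n x + IZR j - p) < del).
  { unfold u in Hun. fold j in Hun. apply Rabs_def2 in Hun. apply Rabs_def1; lra. }
  assert (HFz : Rabs (F (g n x + IZR j) - F p) < r / 2).
  { destruct (Req_dec (g n x + IZR j) p) as [E|E].
    - rewrite E, Rminus_diag, Rabs_R0. lra.
    - apply (Hd (g n x + IZR j)). split; [split; [constructor | auto] | exact Hz]. }
  rewrite lift_Z in HFz by (apply Glift; auto).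
  rewrite minus_IZR. apply Rabs_def2 in HFz. apply Rabs_def2 in HFp. apply Rabs_def1; lra.
Qed.

Lemma comm_iter T H : is_lift T -> is_lift H ->
  (forall x, ceq (T (H x)) (H (T x))) ->
  forall j x, ceq (H (Nat.iter j T x)) (Nat.iter j T (H x)).
Proof.
  intros HT HH Hc j. induction j as [|j IH]; intro x; simpl.
  - apply ceq_refl.
  - eapply ceq_trans; [apply ceq_sym, Hc | apply ceq_lift; auto].
Qed.

(** * The union of the interiors of theta^j(I_0) *)

Lemma union_ceq T kappa a l y y' :
  ceq y y' -> in_union_int T kappa a l y -> in_union_int T kappa a l y'.
Proof.
  intros Hc (j & t & Hj & Ht & Hy). exists j, t. split; [exact Hj | split; [exact Ht|]].
  eapply ceq_trans; [apply ceq_sym, Hc | exact Hy].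
Qed.

Lemma in_union_iter T kappa a l j z y : (1 <= kappa)%nat ->
  heq (Nat.iter kappa T) (fun x => x) -> (j <= kappa)%nat ->
  a < z < a + l -> ceq y (Nat.iter j T z) -> in_union_int T kappa a l y.
Proof.
  intros Hk Hper Hj Hz Hy.
  destruct (Nat.eq_dec j kappa) as [Ej|Ej].
  - exists 0%nat, (z - a). split; [lia | split; [lra|]].
    simpl. replace (a + (z - a)) with z by ring.
    eapply ceq_trans; [exact Hy | subst; apply Hper].
  - exists j, (z - a). split; [lia | split; [lra|]].
    replace (a + (z - a)) with z by ring. exact Hy.
Qed.

(* Let [c, c + disp c[ be the arc from c to T c and let
   e = T c' + k be the lift of T c' in it, with c' <= c both interior to I_0.
   If h commutes with T and sends [c, e] into Int(I_0), then h sends every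
   point outside the union of the interiors into that union: points of
   T^j([c, e]) go to T^j(h [c, e]), and T^j(]e, c + disp c[) = T^(j+1)(]c', c[)
   is already inside the union. *)
Lemma complement_into_union T kappa a l h c' c k : is_lift T -> (1 <= kappa)%nat ->
  heq (Nat.iter kappa T) (fun x => x) -> is_lift h ->
  (forall x, ceq (T (h x)) (h (T x))) ->
  a < c' <= c -> c < a + l -> T c + IZR k = c + disp T c ->
  (forall x, c <= x <= T c' + IZR k -> a < h x < a + l) ->
  forall y, ~ in_union_int T kappa a l y -> in_union_int T kappa a l (h y).
Proof.
  intros HT Hk Hper Hh Hcomm Hc' Hc Hk_spec Hhce y Hny.
  destruct (fundamental_arc_cover T HT kappa c Hk Hper y) as (j & w & Hj & Hw & Hyw).
  destruct (Rle_lt_dec w (T c' + IZR k)) as [Hwe|Hwe].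
  - apply (in_union_iter T kappa a l j (h w)); auto; [lia | apply Hhce; lra |].
    eapply ceq_trans; [apply ceq_lift; [exact Hh | exact Hyw]|].
    apply comm_iter; auto.
  - exfalso. apply Hny.
    destruct (continuous_attains (fun x => T x + IZR k) c' c w) as [z [Hz Hz']];
      [apply shift_lift; exact HT | lra | lra |].
    apply (in_union_iter T kappa a l (S j) z); auto; [lra|].
    eapply ceq_trans; [exact Hyw|]. rewrite Nat.iter_succ_r.
    apply ceq_lift; [apply iter_lift; auto | rewrite <- Hz'; apply ceq_sym, ceq_shift].
Qed.

(* theta does not send a point of I_0 = [a, a + l] back onto a later point
   of I_0: for s < t, the lift of T (a + s) in the arc [a + t, T (a + t)[
   lies strictly above a + t. *)
Lemma image_gap T kappa a l s t : is_lift T -> (1 <= kappa)%nat ->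
  heq (Nat.iter kappa T) (fun x => x) ->
  (forall i j s t, (i < kappa)%nat -> (j < kappa)%nat -> i <> j ->
     0 <= s <= l -> 0 <= t <= l -> ~ ceq (Nat.iter i T (a + s)) (Nat.iter j T (a + t))) ->
  0 < l < 1 -> 0 <= s < t -> t <= l ->
  a + t < T (a + s) + IZR (up (a + t - T (a + t))).
Proof.
  intros HT Hk Hper Hdisj Hl Hs Ht.
  set (U := up (a + t - T (a + t))).
  destruct (Rlt_le_dec (a + t) (T (a + s) + IZR U)) as [Hlt|Hge]; [exact Hlt | exfalso].
  pose proof (disp_spec T (a + t)) as Hspec. pose proof (disp_bounds T (a + t)).
  fold U in Hspec.
  (* some z in [a + s, a + t] is sent by T onto a + t *)
  destruct (continuous_attains (fun x => T x + IZR U) (a + s) (a + t) (a + t))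
    as [z [Hz Hz']].
  { apply shift_lift; exact HT. }
  { lra. }
  { lra. }
  assert (Hzc : ceq (T z) (a + t)) by (rewrite <- Hz'; apply ceq_shift).
  destruct (Nat.eq_dec kappa 1) as [Hk1|Hk1].
  - subst kappa. assert (Hz1 := Hper z). simpl in Hz1.
    assert (Hza : z = a + t).
    { apply ceq_close; [eapply ceq_trans; [apply ceq_sym, Hz1 | exact Hzc]|].
      apply Rabs_def1; lra. }
    subst z. lra.
  - apply (Hdisj 1%nat 0%nat (z - a) t); try lia; try lra.
    simpl. replace (a + (z - a)) with z by ring. exact Hzc.
Qed.

Theorem corollary2p7
  (G : (R -> R) -> Prop) (T : R -> R) (kappa : nat) (a l : R)
  (HG : is_subgroup G)
  (Hmin : minimal G)
  (Hnomeas : ~ exists mu, prob_measure mu /\ invariant_measure G mu)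
  (HT : is_lift T)
  (Hper : (1 <= kappa)%nat /\ heq (Nat.iter kappa T) (fun x => x) /\
          forall n, (1 <= n < kappa)%nat -> ~ heq (Nat.iter n T) (fun x => x))
  (Hcomm : forall F, G F -> heq (fun x => T (F x)) (fun x => F (T x)))
  (Hcontr : forall x d, 0 < d <= 1 -> ceq (T x) (x + d) ->
     forall b m, 0 < m < 1 -> (forall t, 0 <= t <= m -> in_arc_co x d (b + t)) ->
     contractible G b m)
  (Hl : 0 < l < 1)
  (Hdisj : forall i j s t, (i < kappa)%nat -> (j < kappa)%nat -> i <> j ->
     0 <= s <= l -> 0 <= t <= l -> ~ ceq (Nat.iter i T (a + s)) (Nat.iter j T (a + t))) :
  exists h, G h /\
    (exists y, ceq (h y) y) /\
    (forall y, ceq (h y) y -> in_union_int T kappa a l y) /\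
    (forall y, ~ in_union_int T kappa a l y -> in_union_int T kappa a l (h y)).
Proof.
  destruct Hper as [Hk [Hpk _]].
  set (c' := a + l / 4). set (c := a + l / 2).
  set (U := up (c - T c)). set (d := disp T c). set (e := T c' + IZR U).
  pose proof (disp_bounds T c) as Hd. fold d in Hd.
  assert (HTc : T c + IZR U = c + d) by apply disp_spec.
  assert (Hce : c < e) by (apply (image_gap T kappa a l (l / 4) (l / 2)); auto; lra).
  assert (Hed : e < c + d).
  { assert (T c' < T c) by (apply HT; unfold c', c; lra). unfold e. lra. }
  assert (Hcontr_ce : contractible G c (e - c)).
  { apply (Hcontr c d Hd); [rewrite <- HTc; apply ceq_shift | lra |].
    intros t Ht. exists 0%Z. simpl. lra. }
  set (m := Rmin e (a + l)).
  assert (Hm : c < m <= e /\ m <= a + l).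
  { unfold m. split; [split|]; [apply Rmin_case; unfold c in *; lra | apply Rmin_l | apply Rmin_r]. }
  destruct (contractible_into_ball G c (e - c) ((c + m) / 2) ((m - c) / 2)
              HG Hmin Hcontr_ce ltac:(lra) ltac:(lra)) as [h [Gh Hh]].
  assert (Hhce : forall x, c <= x <= e -> c < h x < m).
  { intros x Hx. specialize (Hh x ltac:(lra)). apply Rabs_def2 in Hh. lra. }
  assert (Hhlift : is_lift h) by (apply HG; exact Gh).
  assert (Hout : forall y, ~ in_union_int T kappa a l y -> in_union_int T kappa a l (h y)).
  { apply (complement_into_union T kappa a l h c' c U); auto; [|unfold c', c; lra|unfold c; lra|].
    - intro x. apply (Hcomm h Gh x).
    - intros x Hx. pose proof (Hhce x Hx). unfold c in *; lra. }
  exists h. split; [exact Gh | split; [|split; [|exact Hout]]].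
  - destruct (fixed_point_in_interval h c e) as [z [_ Hz]];
      [apply Hhlift | lra | pose proof (Hhce c); lra | pose proof (Hhce e); lra |].
    exists z. rewrite Hz. apply ceq_refl.
  - (* a fixed point outside the union would be sent into the union *)
    intros y Hy. destruct (classic (in_union_int T kappa a l y)) as [Hu|Hu]; [exact Hu|].
    apply (union_ceq _ _ _ _ (h y)); [exact Hy | apply Hout, Hu].
Qed.
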